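(* Let $\mathcal D$ be a complete, cocomplete, extremally co-well-powered (extremal epi, mono) category. Then $\mathcal K(\mathcal D)$ is complete and cocomplete.
   Context: For a category $\mathcal D$ and an object $d$, $M(d)$ denotes the class of all morphisms with source $d$, quasi-ordered by $\phi_1\ge\phi_2$ iff there is $h$ with $h\phi_1=\phi_2$. A projective filtration on $d$ is a non-empty, directed, saturated subclass $F\subseteq M(d)$ (saturated: $\phi_1\in F$, $\phi_1\ge\phi_2$ imply $\phi_2\in F$). A subclass $S\subseteq F$ is initial if every $\phi\in F$ satisfies $\phi\le\psi$ for some $\psi\in S$. For $f\colon d'\to d$, $f^*(F)=\{\phi f:\phi\in F\}$. $\mathcal P(\mathcal D)$ has objects $(d,F)$, and morphisms $(d_1,F_1)\to(d_2,F_2)$ the morphisms $f\colon d_1\to d_2$ of $\mathcal D$ with $f^*(F_2)\subseteq F_1$. $F$ is reduced if it has an initial subclass of extremal epimorphisms; $\mathcal Q(\mathcal D)$ is the full subcategory of reduced filtered objects. For $(d,F)\in\mathcal Q(\mathcal D)$, $(F,\mathcal D)$ is the category with objects the elements of $F$ and morphisms $\phi_1\to\phi_2$ the morphisms $g$ between their targets with $g\phi_1=\phi_2$; $\varprojlim F$ is the limit of the target functor $(F,\mathcal D)\to\mathcal D$, with canonical morphism $d\to\varprojlim F$. $(d,F)$ is an iso-filtration if this canonical morphism is an isomorphism; $\mathcal K(\mathcal D)$ is the full subcategory of $\mathcal Q(\mathcal D)$ of iso-filtrations. *)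

From Stdlib Require Import ProofIrrelevance.

Set Universe Polymorphism.
Set Implicit Arguments.
Unset Strict Implicit.

Record Category@{o h} : Type := {
  Obj :> Type@{o};
  Hom : Obj -> Obj -> Type@{h};
  idm : forall a, Hom a a;
  comp : forall a b c, Hom b c -> Hom a b -> Hom a c;   (* comp g f = g ∘ f *)
  comp_id_l : forall a b (f : Hom a b), comp (idm b) f = f;
  comp_id_r : forall a b (f : Hom a b), comp f (idm a) = f;
  comp_assoc : forall a b c e (f : Hom a b) (g : Hom b c) (k : Hom c e),
      comp k (comp g f) = comp (comp k g) f
}.
Arguments idm {C} a : rename.
Arguments comp {C a b c} g f : rename.
Arguments Hom {C} a b : rename.

Section Basic.
Context (C : Category).

Definition IsMono {a b : C} (m : Hom a b) : Prop :=
  forall x (g1 g2 : Hom x a), comp m g1 = comp m g2 -> g1 = g2.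

Definition IsEpi {a b : C} (e : Hom a b) : Prop :=
  forall y (g1 g2 : Hom b y), comp g1 e = comp g2 e -> g1 = g2.

Definition IsIso {a b : C} (f : Hom a b) : Prop :=
  exists g : Hom b a, comp g f = idm a /\ comp f g = idm b.

Definition IsExtremalEpi {a b : C} (e : Hom a b) : Prop :=
  IsEpi e /\
  forall c (g : Hom a c) (m : Hom c b), IsMono m -> comp m g = e -> IsIso m.

End Basic.

Record Functor (J C : Category) : Type := {
  fobj :> J -> C;
  fmap : forall i j, Hom i j -> Hom (fobj i) (fobj j);
  fmap_id : forall i, fmap (idm i) = idm (fobj i);
  fmap_comp : forall i j k (u : Hom i j) (v : Hom j k),
      fmap (comp v u) = comp (fmap v) (fmap u)
}.
Arguments fmap {J C} F {i j} u : rename.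

Section Limits.
Context {J C : Category} (F : Functor J C).

Definition IsCone (L : C) (pi : forall j, Hom L (F j)) : Prop :=
  forall i j (u : Hom i j), comp (fmap F u) (pi i) = pi j.

Definition IsLimit (L : C) (pi : forall j, Hom L (F j)) : Prop :=
  @IsCone L pi /\
  forall (X : C) (alpha : forall j, Hom X (F j)), @IsCone X alpha ->
    exists h : Hom X L, (forall j, comp (pi j) h = alpha j) /\
      (forall h' : Hom X L, (forall j, comp (pi j) h' = alpha j) -> h' = h).

Definition IsCocone (L : C) (iota : forall j, Hom (F j) L) : Prop :=
  forall i j (u : Hom i j), comp (iota j) (fmap F u) = iota i.

Definition IsColimit (L : C) (iota : forall j, Hom (F j) L) : Prop :=
  @IsCocone L iota /\
  forall (X : C) (alpha : forall j, Hom (F j) X), @IsCocone X alpha ->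
    exists h : Hom L X, (forall j, comp h (iota j) = alpha j) /\
      (forall h' : Hom L X, (forall j, comp h' (iota j) = alpha j) -> h' = h).

End Limits.
Arguments IsCone {J C} F {L} pi.
Arguments IsLimit {J C} F {L} pi.
Arguments IsCocone {J C} F {L} iota.
Arguments IsColimit {J C} F {L} iota.

(* Completeness / cocompleteness: (co)limits of all small diagrams, i.e.
   diagrams indexed by categories whose objects and morphisms live in the
   hom-universe h of C (C is locally small w.r.t. h). *)
Definition Complete@{o h} (C : Category@{o h}) : Prop :=
  forall (J : Category@{h h}) (F : Functor J C),
    exists (L : C) (pi : forall j, Hom L (F j)), IsLimit F pi.

Definition Cocomplete@{o h} (C : Category@{o h}) : Prop :=
  forall (J : Category@{h h}) (F : Functor J C),
    exists (L : C) (iota : forall j, Hom (F j) L), IsColimit F iota.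

Definition ExtrEpiMonoCategory (C : Category) : Prop :=
  (forall (a b : C) (f : Hom a b), exists (c : C) (e : Hom a c) (m : Hom c b),
      IsExtremalEpi e /\ IsMono m /\ comp m e = f) /\
  (forall (a b c d : C) (e : Hom a b) (m : Hom c d) (u : Hom a c) (v : Hom b d),
      IsExtremalEpi e -> IsMono m -> comp v e = comp m u ->
      exists t : Hom b c, (comp t e = u /\ comp m t = v) /\
        forall t' : Hom b c, comp t' e = u -> comp m t' = v -> t' = t).

(* Extremally co-well-powered: for every object d there is a SET (a type in
   the hom-universe h) of extremal epimorphisms out of d such that every
   extremal epimorphism out of d is isomorphic (under d) to one of them. *)
Definition ExtremallyCoWellPowered@{o h} (C : Category@{o h}) : Prop :=
  forall d : C, exists (I : Type@{h}) (cod : I -> C) (q : forall i, Hom d (cod i)),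
    (forall i, IsExtremalEpi (q i)) /\
    forall (c : C) (e : Hom d c), IsExtremalEpi e ->
      exists i (k : Hom (cod i) c), IsIso k /\ comp k (q i) = e.

(* Projective filtrations.  A subclass of M(d) is a predicate on
   morphisms with source d.                                            *)
Section Filtrations.
Context (D : Category).

Definition MClass (d : D) := forall c : D, Hom d c -> Prop.

Definition Mge {d c1 c2 : D} (phi1 : Hom d c1) (phi2 : Hom d c2) : Prop :=
  exists h : Hom c1 c2, comp h phi1 = phi2.

Definition IsProjFiltration {d : D} (F : MClass d) : Prop :=
  (exists c (phi : Hom d c), F c phi) /\
  (forall c1 (phi1 : Hom d c1) c2 (phi2 : Hom d c2), F c1 phi1 -> F c2 phi2 ->
     exists c (psi : Hom d c), F c psi /\ Mge psi phi1 /\ Mge psi phi2) /\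
  (forall c1 (phi1 : Hom d c1) c2 (phi2 : Hom d c2),
     F c1 phi1 -> Mge phi1 phi2 -> F c2 phi2).

Definition IsInitialSubclass {d : D} (S F : MClass d) : Prop :=
  (forall c (phi : Hom d c), S c phi -> F c phi) /\
  (forall c (phi : Hom d c), F c phi ->
     exists c' (psi : Hom d c'), S c' psi /\ Mge psi phi).

Definition IsReduced {d : D} (F : MClass d) : Prop :=
  exists S : MClass d, IsInitialSubclass S F /\
    forall c (phi : Hom d c), S c phi -> IsExtremalEpi phi.

Definition FObj {d : D} (F : MClass d) : Type :=
  { c : D & { phi : Hom d c | F c phi } }.
Definition FObj_cod {d : D} {F : MClass d} (x : FObj F) : D := projT1 x.
Definition FObj_mor {d : D} {F : MClass d} (x : FObj F) : Hom d (FObj_cod x) :=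
  proj1_sig (projT2 x).
Definition FHom {d : D} {F : MClass d} (x y : FObj F) : Type :=
  { g : Hom (FObj_cod x) (FObj_cod y) | comp g (FObj_mor x) = FObj_mor y }.

Lemma sig_eq_pi (A : Type) (P : A -> Prop) (p q : {a : A | P a}) :
  proj1_sig p = proj1_sig q -> p = q.
Proof.
  destruct p as [a pa], q as [b pb]; simpl; intros ->.
  f_equal; apply proof_irrelevance.
Qed.

Definition FHom_id {d : D} {F : MClass d} (x : FObj F) : FHom x x :=
  exist _ (idm _) (comp_id_l _).

Definition FHom_comp {d : D} {F : MClass d} (x y z : FObj F)
  (g : FHom y z) (f : FHom x y) : FHom x z.
Proof.
  exists (comp (proj1_sig g) (proj1_sig f)).
  rewrite <- comp_assoc, (proj2_sig f); exact (proj2_sig g).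
Defined.

Definition FCat {d : D} (F : MClass d) : Category.
Proof.
  refine {| Obj := FObj F; Hom := @FHom d F; idm := @FHom_id d F;
            comp := @FHom_comp d F |}.
  - intros; apply sig_eq_pi; simpl; apply comp_id_l.
  - intros; apply sig_eq_pi; simpl; apply comp_id_r.
  - intros; apply sig_eq_pi; simpl; apply comp_assoc.
Defined.

Definition TargetFunctor {d : D} (F : MClass d) : Functor (FCat F) D.
Proof.
  refine {| fobj := fun x : FCat F => FObj_cod x;
            fmap := fun x y (g : Hom x y) => proj1_sig g |}.
  - intros; reflexivity.
  - intros; reflexivity.
Defined.

Definition IsIsoFiltration {d : D} (F : MClass d) : Prop :=
  IsProjFiltration F /\ IsReduced F /\
  exists (L : D) (pi : forall x : FCat F, Hom L (TargetFunctor F x)),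
    IsLimit (TargetFunctor F) pi /\
    exists h : Hom d L,
      (forall x : FCat F, comp (pi x) h = FObj_mor x) /\ IsIso h.

Definition PMor {d1 d2 : D} (F1 : MClass d1) (F2 : MClass d2) (f : Hom d1 d2)
  : Prop := forall c (phi : Hom d2 c), F2 c phi -> F1 c (comp phi f).

(* The category K(D) (full subcategory of Q(D) ⊆ P(D) of iso-filtrations). *)
Definition KObj : Type := { d : D & { F : MClass d | IsIsoFiltration F } }.
Definition KObj_obj (x : KObj) : D := projT1 x.
Definition KObj_fil (x : KObj) : MClass (KObj_obj x) := proj1_sig (projT2 x).
Definition KHom (x y : KObj) : Type :=
  { f : Hom (KObj_obj x) (KObj_obj y) | PMor (@KObj_fil x) (@KObj_fil y) f }.

Definition KHom_id (x : KObj) : KHom x x.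
Proof.
  exists (idm _); intros c phi H; rewrite comp_id_r; exact H.
Defined.

Definition KHom_comp (x y z : KObj) (g : KHom y z) (f : KHom x y) : KHom x z.
Proof.
  exists (comp (proj1_sig g) (proj1_sig f)).
  intros c phi H; rewrite comp_assoc.
  apply (proj2_sig f), (proj2_sig g), H.
Defined.

Definition KCat : Category.
Proof.
  refine {| Obj := KObj; Hom := KHom; idm := KHom_id; comp := KHom_comp |}.
  - intros; apply sig_eq_pi; simpl; apply comp_id_l.
  - intros; apply sig_eq_pi; simpl; apply comp_id_r.
  - intros; apply sig_eq_pi; simpl; apply comp_assoc.
Defined.

End Filtrations.

(* For a diagram in K(D), take its limit L in D and filter it by the class
   generated by the filtrations of the vertices pulled back along the projections.  As
   every vertex is an iso-filtration, a cone over this filtration yields a cone over the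
   diagram, so L is again the limit of its filtration.

   Take the colimit C in D with the filtration F of the morphisms whose
   composites with all coprojections lie in the vertex filtrations; this is the colimit
   in Q(D).  Co-well-poweredness makes F essentially small, so its limit L exists, and
   the saturation of the limit projections of L is an iso-filtration.  This filtered L
   is the reflection of (C, F) into K(D), hence the colimit there. *)

From Stdlib Require Import ProofIrrelevance IndefiniteDescription.

Set Universe Polymorphism.
(* Otherwise the hom universe of the main theorem would be collapsed to Set. *)
Unset Universe Minimization ToSet.

Section CategoryFacts.
Context {C : Category}.

Lemma limit_jointly_mono {J : Category} {F : Functor J C} {L : C}
    {pi : forall j, Hom L (F j)} :
  IsLimit F pi ->
  forall (X : C) (a b : Hom X L), (forall j, comp (pi j) a = comp (pi j) b) -> a = b.
Proof.
  intros [Hcone Huniv] X a b Hab.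
  destruct (Huniv X (fun j => comp (pi j) a)) as [h [_ Hh]].
  { intros i j u; rewrite comp_assoc, Hcone; reflexivity. }
  rewrite (Hh a (fun j => eq_refl)), (Hh b (fun j => eq_sym (Hab j))); reflexivity.
Qed.

Lemma limit_iso_transport {J : Category} {F : Functor J C} {L X : C}
    {pi : forall j, Hom L (F j)} {sigma : forall j, Hom X (F j)} {h : Hom X L} :
  IsLimit F pi -> IsIso h -> (forall j, comp (pi j) h = sigma j) -> IsLimit F sigma.
Proof.
  intros [Hcone Huniv] [g [Hgh Hhg]] Hsigma; split.
  - intros i j u; rewrite <- !Hsigma, comp_assoc, Hcone; reflexivity.
  - intros Y alpha Halpha.
    destruct (Huniv Y alpha Halpha) as [k [Hk Hk_uniq]].
    exists (comp g k); split.
    + intros j; rewrite <- Hsigma, <- comp_assoc, (comp_assoc k g h), Hhg, comp_id_l.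
      apply Hk.
    + intros k' Hk'.
      assert (E : comp h k' = k).
      { apply Hk_uniq; intros j; rewrite comp_assoc, Hsigma; apply Hk'. }
      rewrite <- E, comp_assoc, Hgh, comp_id_l; reflexivity.
Qed.

Definition IsTerminal (t : C) : Prop :=
  forall x : C, exists f : Hom x t, forall g : Hom x t, g = f.

Definition IsProduct {p a b : C} (p1 : Hom p a) (p2 : Hom p b) : Prop :=
  (forall x (f : Hom x a) (g : Hom x b), exists h, comp p1 h = f /\ comp p2 h = g) /\
  (forall x (h h' : Hom x p), comp p1 h = comp p1 h' -> comp p2 h = comp p2 h' -> h = h').

Lemma terminal_unique {t : C} : IsTerminal t -> forall x (f g : Hom x t), f = g.
Proof. intros Ht x f g; destruct (Ht x) as [h Hh]; rewrite (Hh f), (Hh g); reflexivity. Qed.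

End CategoryFacts.

Definition HasTerminal (C : Category) : Prop := exists t : C, IsTerminal t.

Definition HasBinaryProducts (C : Category) : Prop :=
  forall a b : C, exists p (p1 : Hom p a) (p2 : Hom p b), IsProduct p1 p2.

Definition DiscreteCat (I : Type) : Category.
Proof.
  refine {| Obj := I; Hom := fun i j => i = j; idm := @eq_refl I;
            comp := fun a b c g f => eq_trans f g |};
    intros; apply proof_irrelevance.
Defined.

Definition DiscreteFunctor {C : Category} {I : Type} (A : I -> C) :
  Functor (DiscreteCat I) C.
Proof.
  refine {| fobj := fun i : DiscreteCat I => A i;
            fmap := fun i j (u : i = j) =>
              match u in _ = k return Hom (A i) (A k) with eq_refl => idm _ end |}.
  - reflexivity.
  - intros i j k [] []; symmetry; apply comp_id_l.
Defined.

Section SmallProducts.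
Context {C : Category}.

Lemma complete_product_family (HC : Complete C) {I : Type} (A : I -> C) :
  exists (P : C) (p : forall i, Hom P (A i)),
    (forall X (f : forall i, Hom X (A i)), exists h, forall i, comp (p i) h = f i) /\
    (forall X (h h' : Hom X P), (forall i, comp (p i) h = comp (p i) h') -> h = h').
Proof.
  destruct (HC (DiscreteCat I) (DiscreteFunctor A)) as [P [p Hlim]].
  exists P, p; split.
  - intros X f; destruct (proj2 Hlim X f) as [h [Hh _]].
    + intros i j []; apply comp_id_l.
    + exists h; exact Hh.
  - exact (limit_jointly_mono Hlim).
Qed.

Lemma complete_has_terminal : Complete C -> HasTerminal C.
Proof.
  intros HC; destruct (complete_product_family HC (fun e : Empty_set => match e with end))
    as [t [p [Hexist Huniq]]].
  exists t; intros x.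
  destruct (Hexist x (fun e => match e with end)) as [f _].
  exists f; intros g; apply Huniq; intros [].
Qed.

Lemma complete_has_binary_products : Complete C -> HasBinaryProducts C.
Proof.
  intros HC a b.
  destruct (complete_product_family HC (fun i : bool => if i then a else b))
    as [P [p [Hexist Huniq]]].
  exists P, (p true), (p false); split.
  - intros x f g.
    destruct (Hexist x (fun i => if i return Hom x (if i then a else b) then f else g))
      as [h Hh].
    exists h; split; [exact (Hh true) | exact (Hh false)].
  - intros x h h' E1 E2; apply Huniq; intros [|]; assumption.
Qed.

End SmallProducts.

Section Filtrations.
Context {D : Category}.

Lemma mge_refl {d c : D} (f : Hom d c) : Mge f f.
Proof. exists (idm c); apply comp_id_l. Qed.

Lemma mge_trans {d c1 c2 c3 : D} {f1 : Hom d c1} {f2 : Hom d c2} {f3 : Hom d c3} :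
  Mge f1 f2 -> Mge f2 f3 -> Mge f1 f3.
Proof.
  intros [h1 E1] [h2 E2]; exists (comp h2 h1); rewrite <- comp_assoc, E1; exact E2.
Qed.

Lemma extremal_diagonal (HEM : ExtrEpiMonoCategory D) {a b c e : D}
    {q : Hom a b} {m : Hom c e} {u : Hom a c} {v : Hom b e} :
  IsExtremalEpi q -> IsMono m -> comp v q = comp m u -> Mge q u.
Proof.
  intros Hq Hm Hsq; destruct (proj2 HEM _ _ _ _ q m u v Hq Hm Hsq) as [t [[Ht _] _]].
  exists t; exact Ht.
Qed.

Section Filtration.
Context {d : D} {F : MClass d} (HF : IsProjFiltration F).

Lemma filtration_saturated {c1 c2 : D} {phi1 : Hom d c1} {phi2 : Hom d c2} :
  F c1 phi1 -> Mge phi1 phi2 -> F c2 phi2.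
Proof. apply (proj2 (proj2 HF)). Qed.

Lemma filtration_terminal {t : D} (f : Hom d t) : IsTerminal t -> F t f.
Proof.
  intros Ht; destruct (proj1 HF) as [c [phi Hphi]].
  apply (filtration_saturated Hphi); destruct (Ht c) as [g _].
  exists g; apply (terminal_unique Ht).
Qed.

Lemma filtration_product {p a b : D} {p1 : Hom p a} {p2 : Hom p b} {h : Hom d p} :
  IsProduct p1 p2 -> F a (comp p1 h) -> F b (comp p2 h) -> F p h.
Proof.
  intros [Hpair Huniq] H1 H2.
  destruct (proj1 (proj2 HF) _ _ _ _ H1 H2) as [c [psi [Hpsi [[k1 E1] [k2 E2]]]]].
  destruct (Hpair c k1 k2) as [k [Ek1 Ek2]].
  apply (filtration_saturated Hpsi); exists k.
  apply Huniq; rewrite comp_assoc; [rewrite Ek1 | rewrite Ek2]; assumption.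
Qed.

Lemma reduced_mono_cancel (HEM : ExtrEpiMonoCategory D) (HR : IsReduced F)
    {a c : D} {x : Hom d c} {m : Hom c a} :
  F a (comp m x) -> IsMono m -> F c x.
Proof.
  intros Hmx Hm; destruct HR as [S [[HSF HSinit] HSepi]].
  destruct (HSinit _ _ Hmx) as [c' [q [HSq [k Hk]]]].
  apply (filtration_saturated (HSF _ _ HSq)).
  exact (extremal_diagonal HEM (HSepi _ _ HSq) Hm Hk).
Qed.

End Filtration.

Lemma reduced_of_epi_part_closed (HEM : ExtrEpiMonoCategory D) {d : D} {F : MClass d} :
  (forall a (f : Hom d a) c (e : Hom d c) (m : Hom c a),
      F a f -> IsExtremalEpi e -> IsMono m -> comp m e = f -> F c e) ->
  IsReduced F.
Proof.
  intros Hclosed; exists (fun c e => F c e /\ IsExtremalEpi e); split; [split|].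
  - intros c e [He _]; exact He.
  - intros c phi Hphi; destruct (proj1 HEM _ _ phi) as [c' [e [m [He [Hm Hme]]]]].
    exists c', e; split; [split; [exact (Hclosed _ _ _ _ _ Hphi He Hm Hme) | exact He]|].
    exists m; exact Hme.
  - intros c e [_ He]; exact He.
Qed.

(* Cones and limits over the category (F, D), indexed directly by the members of F. *)
Definition FlatCone {d : D} {F : MClass d} {X : D}
    (al : forall c (phi : Hom d c), F c phi -> Hom X c) : Prop :=
  forall c1 (phi1 : Hom d c1) (H1 : F c1 phi1) c2 (phi2 : Hom d c2) (H2 : F c2 phi2)
    (g : Hom c1 c2), comp g phi1 = phi2 -> comp g (al c1 phi1 H1) = al c2 phi2 H2.

Definition IsFlatLimit {d : D} (F : MClass d) (L : D)
    (pi : forall c (phi : Hom d c), F c phi -> Hom L c) : Prop :=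
  FlatCone pi /\
  forall X al, FlatCone (F := F) (X := X) al ->
    exists h : Hom X L, (forall c phi H, comp (pi c phi H) h = al c phi H) /\
      forall h', (forall c phi H, comp (pi c phi H) h' = al c phi H) -> h' = h.

Section FlatLimits.
Context {d : D} {F : MClass d}.

Lemma flat_cone_proper {X : D} {al : forall c (phi : Hom d c), F c phi -> Hom X c}
    {c : D} {phi phi' : Hom d c} (H : F c phi) (H' : F c phi') :
  FlatCone al -> phi = phi' -> al c phi H = al c phi' H'.
Proof.
  intros Hal E; rewrite <- (comp_id_l (al c phi H)); apply Hal; rewrite E; apply comp_id_l.
Qed.

Lemma flat_cone_target {X : D} (al : forall c (phi : Hom d c), F c phi -> Hom X c) :
  FlatCone al <-> IsCone (TargetFunctor F) (fun x => al _ _ (proj2_sig (projT2 x))).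
Proof.
  split.
  - intros Hal [c1 [phi1 H1]] [c2 [phi2 H2]] [g Hg]; exact (Hal _ _ H1 _ _ H2 g Hg).
  - intros Hal c1 phi1 H1 c2 phi2 H2 g Hg.
    exact (Hal (existT _ c1 (exist _ phi1 H1)) (existT _ c2 (exist _ phi2 H2)) (exist _ g Hg)).
Qed.

Lemma flat_limit_target {L : D} (pi : forall c (phi : Hom d c), F c phi -> Hom L c) :
  IsFlatLimit F L pi <-> IsLimit (TargetFunctor F) (fun x => pi _ _ (proj2_sig (projT2 x))).
Proof.
  split.
  - intros [Hcone Huniv]; split; [exact (proj1 (flat_cone_target pi) Hcone)|].
    intros X al Hal.
    destruct (Huniv X (fun c phi H => al (existT _ c (exist _ phi H)))) as [h [Hh Hh_uniq]].
    { apply flat_cone_target; intros [c1 [phi1 H1]] [c2 [phi2 H2]] u; exact (Hal _ _ u). }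
    exists h; split.
    + intros [c [phi H]]; exact (Hh c phi H).
    + intros h' Hh'; apply Hh_uniq; intros c phi H; exact (Hh' (existT _ c (exist _ phi H))).
  - intros [Hcone Huniv]; split; [exact (proj2 (flat_cone_target pi) Hcone)|].
    intros X al Hal.
    destruct (Huniv X _ (proj1 (flat_cone_target al) Hal)) as [h [Hh Hh_uniq]].
    exists h; split.
    + intros c phi H; exact (Hh (existT _ c (exist _ phi H))).
    + intros h' Hh'; apply Hh_uniq; intros [c [phi H]]; exact (Hh' c phi H).
Qed.

Lemma flat_limit_jointly_mono {L : D} {pi : forall c (phi : Hom d c), F c phi -> Hom L c} :
  IsFlatLimit F L pi ->
  forall (X : D) (a b : Hom X L),
    (forall c phi H, comp (pi c phi H) a = comp (pi c phi H) b) -> a = b.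
Proof.
  intros Hlim X a b Hab; apply flat_limit_target in Hlim.
  apply (limit_jointly_mono Hlim); intros x; apply Hab.
Qed.

Lemma iso_filtration_flat_limit :
  IsIsoFiltration F -> IsFlatLimit F d (fun _ phi _ => phi).
Proof.
  intros [_ [_ [L [pi [Hlim [h [Hh Hiso]]]]]]].
  apply flat_limit_target; exact (limit_iso_transport Hlim Hiso Hh).
Qed.

Lemma iso_filtration_of_flat_limit :
  IsProjFiltration F -> IsReduced F -> IsFlatLimit F d (fun _ phi _ => phi) ->
  IsIsoFiltration F.
Proof.
  intros HF HR Hlim; split; [exact HF | split; [exact HR|]].
  exists d, (fun x => FObj_mor x); split; [exact (proj1 (flat_limit_target _) Hlim)|].
  exists (idm d); split; [intros x; apply comp_id_r|].
  exists (idm d); split; apply comp_id_l.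
Qed.

End FlatLimits.

Section Generated.
Context {d : D} (G : MClass d).

(* Products and terminal objects make the generated class directed and non-empty;
   extremal-epi parts make it reduced. *)
Inductive Generated : MClass d :=
| gen_base {c} {phi : Hom d c} : G c phi -> Generated c phi
| gen_sat {c1} {phi1 : Hom d c1} {c2} {phi2 : Hom d c2} :
    Generated c1 phi1 -> Mge phi1 phi2 -> Generated c2 phi2
| gen_prod {p a b} {p1 : Hom p a} {p2 : Hom p b} {h : Hom d p} :
    IsProduct p1 p2 -> Generated a (comp p1 h) -> Generated b (comp p2 h) -> Generated p h
| gen_term {t} (f : Hom d t) : IsTerminal t -> Generated t f
| gen_epi_part {a} {f : Hom d a} {c} {e : Hom d c} {m : Hom c a} :
    Generated a f -> IsExtremalEpi e -> IsMono m -> comp m e = f -> Generated c e.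

Lemma generated_projective :
  HasTerminal D -> HasBinaryProducts D -> IsProjFiltration Generated.
Proof.
  intros [t Ht] Hprod; split; [|split].
  - destruct (Ht d) as [f _]; exists t, f; exact (gen_term f Ht).
  - intros a f b g Hf Hg; destruct (Hprod a b) as [p [p1 [p2 Hp]]].
    destruct (proj1 Hp d f g) as [h [E1 E2]].
    exists p, h; split; [|split; [exists p1 | exists p2]; assumption].
    apply (gen_prod Hp); [rewrite E1 | rewrite E2]; assumption.
  - exact (@gen_sat).
Qed.

Lemma generated_reduced (HEM : ExtrEpiMonoCategory D) : IsReduced Generated.
Proof. apply (reduced_of_epi_part_closed HEM); exact (@gen_epi_part). Qed.

Lemma generated_pullback (HEM : ExtrEpiMonoCategory D) {d' : D} {F : MClass d'}
    (u : Hom d' d) :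
  IsProjFiltration F -> IsReduced F -> PMor F G u -> PMor F Generated u.
Proof.
  intros HF HR HG c phi H.
  induction H as [c phi Hphi | c1 phi1 c2 phi2 _ IH [g <-] | p a b p1 p2 h Hp _ IH1 _ IH2
                 | t f Ht | a f c e m _ IH _ Hm <-].
  - exact (HG c phi Hphi).
  - apply (filtration_saturated HF IH); exists g; apply comp_assoc.
  - apply (filtration_product HF Hp); rewrite comp_assoc; assumption.
  - exact (filtration_terminal HF _ Ht).
  - apply (reduced_mono_cancel HF HEM HR (m := m)); [rewrite comp_assoc; exact IH | exact Hm].
Qed.

Lemma generated_flat_cone_ext {X : D}
    {al : forall c (phi : Hom d c), Generated c phi -> Hom X c} (h : Hom X d) :
  FlatCone al ->
  (forall c phi, G c phi -> forall H : Generated c phi, comp phi h = al c phi H) ->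
  forall c phi (H : Generated c phi), comp phi h = al c phi H.
Proof.
  intros Hal Hbase c phi H; pose proof H as H0; revert H.
  induction H0 as [c phi Hphi | c1 phi1 c2 phi2 H1 IH [g <-] | p a b p1 p2 h' Hp H1 IH1 H2 IH2
                  | t f Ht | a f c e m Hf IH _ Hm <-]; intros H.
  - exact (Hbase c phi Hphi H).
  - rewrite <- comp_assoc, (IH H1); apply Hal; reflexivity.
  - apply (proj2 Hp); rewrite comp_assoc; [rewrite (IH1 H1) | rewrite (IH2 H2)];
      symmetry; apply Hal; reflexivity.
  - apply (terminal_unique Ht).
  - apply Hm; rewrite comp_assoc, (IH Hf); symmetry; apply Hal; reflexivity.
Qed.

End Generated.

Arguments gen_base {d G c phi} _.

End Filtrations.

Definition KForget {D J : Category} (Fk : Functor J (KCat D)) : Functor J D.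
Proof.
  refine {| fobj := fun j => KObj_obj (Fk j);
            fmap := fun i j u => proj1_sig (fmap Fk u) |}.
  - intros i; rewrite fmap_id; reflexivity.
  - intros i j k u v; rewrite fmap_comp; reflexivity.
Defined.

Lemma KForget_cone {D J : Category} {Fk : Functor J (KCat D)} {X : KCat D}
    {al : forall j, Hom X (Fk j)} :
  IsCone Fk al -> IsCone (KForget Fk) (fun j => proj1_sig (al j)).
Proof. intros Hal i j u; exact (f_equal (@proj1_sig _ _) (Hal i j u)). Qed.

Lemma KForget_cocone {D J : Category} {Fk : Functor J (KCat D)} {X : KCat D}
    {al : forall j, Hom (Fk j) X} :
  IsCocone Fk al -> IsCocone (KForget Fk) (fun j => proj1_sig (al j)).
Proof. intros Hal i j u; exact (f_equal (@proj1_sig _ _) (Hal i j u)). Qed.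

Section KLimit.
Context {D : Category} (HEM : ExtrEpiMonoCategory D)
  (Hterm : HasTerminal D) (Hprod : HasBinaryProducts D).
Context {J : Category} {Fk : Functor J (KCat D)}
  {L : D} {p : forall j, Hom L (KForget Fk j)} (HL : IsLimit (KForget Fk) p).

Definition limit_generators : MClass L := fun c psi =>
  exists j (phi : Hom (KObj_obj (Fk j)) c), KObj_fil phi /\ comp phi (p j) = psi.

Definition limit_filtration : MClass L := Generated limit_generators.

Lemma limit_filtration_gen {j : J} {c : D} {phi : Hom (KObj_obj (Fk j)) c} :
  KObj_fil phi -> limit_filtration c (comp phi (p j)).
Proof. intros H; apply gen_base; exists j, phi; split; [exact H | reflexivity]. Qed.

Lemma limit_filtration_cone_components (X : D)
    (al : forall c (psi : Hom L c), limit_filtration c psi -> Hom X c) :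
  FlatCone al ->
  exists beta : forall j, Hom X (KForget Fk j), IsCone (KForget Fk) beta /\
    forall j c phi (H : KObj_fil phi), comp phi (beta j) = al c _ (limit_filtration_gen H).
Proof.
  intros Hal.
  assert (Hcomp : forall j, exists b : Hom X (KObj_obj (Fk j)),
             forall c phi (H : KObj_fil phi), comp phi b = al c _ (limit_filtration_gen H)).
  { intros j.
    destruct (proj2 (iso_filtration_flat_limit (proj2_sig (projT2 (Fk j)))) X
                (fun c phi H => al c _ (limit_filtration_gen H))) as [b [Hb _]].
    { intros c1 phi1 H1 c2 phi2 H2 g <-; apply Hal, comp_assoc. }
    exists b; exact Hb. }
  assert (Hchoice : exists beta : forall j, Hom X (KObj_obj (Fk j)),
             forall j c phi (H : KObj_fil phi),
               comp phi (beta j) = al c _ (limit_filtration_gen H)).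
  { exists (fun j => proj1_sig (constructive_indefinite_description _ (Hcomp j))).
    intros j; exact (proj2_sig (constructive_indefinite_description _ (Hcomp j))). }
  destruct Hchoice as [beta Hbeta]; exists beta; split; [|exact Hbeta].
  intros i j u; apply (flat_limit_jointly_mono
                         (iso_filtration_flat_limit (proj2_sig (projT2 (Fk j))))).
  intros c phi H; simpl.
  transitivity (al c _ (limit_filtration_gen (proj2_sig (fmap Fk u) c phi H))).
  { rewrite comp_assoc; apply Hbeta. }
  transitivity (al c _ (limit_filtration_gen H)); [|symmetry; apply Hbeta].
  apply (flat_cone_proper _ _ Hal); rewrite <- comp_assoc; f_equal; exact (proj1 HL i j u).
Qed.

Lemma limit_filtration_flat_limit : IsFlatLimit limit_filtration L (fun _ psi _ => psi).
Proof.
  split; [intros c1 psi1 H1 c2 psi2 H2 g Hg; exact Hg|].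
  intros X al Hal.
  destruct (limit_filtration_cone_components X al Hal) as [beta [Hcone Hbeta]].
  destruct (proj2 HL X beta Hcone) as [h [Hh Hh_uniq]].
  exists h; split.
  - apply (generated_flat_cone_ext _ h Hal).
    intros c psi [j [phi [H <-]]] Hpsi.
    transitivity (comp phi (beta j)); [rewrite <- (Hh j); symmetry; apply comp_assoc|].
    etransitivity; [exact (Hbeta j c phi H)|]; apply (flat_cone_proper _ _ Hal); reflexivity.
  - intros h' Hh'; apply Hh_uniq; intros j.
    apply (flat_limit_jointly_mono (iso_filtration_flat_limit (proj2_sig (projT2 (Fk j))))).
    intros c phi H; rewrite comp_assoc.
    exact (eq_trans (Hh' _ _ (limit_filtration_gen H)) (eq_sym (Hbeta j c phi H))).
Qed.

Lemma limit_filtration_iso : IsIsoFiltration limit_filtration.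
Proof.
  apply iso_filtration_of_flat_limit;
    [exact (generated_projective _ Hterm Hprod) | exact (generated_reduced _ HEM)
    | exact limit_filtration_flat_limit].
Qed.

Definition KLimit : KCat D := existT _ L (exist _ limit_filtration limit_filtration_iso).

Definition KLimitProj (j : J) : Hom KLimit (Fk j).
Proof. exists (p j); intros c phi H; exact (limit_filtration_gen H). Defined.

Lemma KLimit_isLimit : IsLimit Fk KLimitProj.
Proof.
  split; [intros i j u; apply sig_eq_pi; exact (proj1 HL i j u)|].
  intros X al Hal.
  destruct (proj2 HL (KObj_obj X) _ (KForget_cone Hal)) as [h [Hh Hh_uniq]].
  destruct (proj2_sig (projT2 X)) as [HXF [HXR _]].
  assert (PM : PMor (KObj_fil (x := X)) limit_filtration h).
  { apply (generated_pullback _ HEM h HXF HXR).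
    intros c psi [j [phi [H <-]]].
    replace (comp (comp phi (p j)) h) with (comp phi (proj1_sig (al j)));
      [exact (proj2_sig (al j) c phi H) | rewrite <- (Hh j); apply comp_assoc]. }
  exists (exist _ h PM); split.
  - intros j; apply sig_eq_pi; apply Hh.
  - intros h' Hh'; apply sig_eq_pi; apply Hh_uniq; intros j.
    exact (f_equal (@proj1_sig _ _) (Hh' j)).
Qed.

End KLimit.

Section UnderCategory.
Context {D : Category} {d : D} {K : Type} (cod : K -> D) (q : forall k, Hom d (cod k)).

Definition UnderHom (a b : K) : Type := { g : Hom (cod a) (cod b) | comp g (q a) = q b }.

Definition UnderHom_comp (a b c : K) (g : UnderHom b c) (f : UnderHom a b) : UnderHom a c.
Proof.
  exists (comp (proj1_sig g) (proj1_sig f)).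
  rewrite <- comp_assoc, (proj2_sig f); exact (proj2_sig g).
Defined.

Definition UnderCat : Category.
Proof.
  refine {| Obj := K; Hom := UnderHom;
            idm := fun a => exist _ (idm (cod a)) (comp_id_l (q a)); comp := UnderHom_comp |}.
  - intros; apply sig_eq_pi; apply comp_id_l.
  - intros; apply sig_eq_pi; apply comp_id_r.
  - intros; apply sig_eq_pi; apply comp_assoc.
Defined.

Definition UnderFunctor : Functor UnderCat D.
Proof.
  refine {| fobj := fun a : UnderCat => cod a;
            fmap := fun a b (g : Hom a b) => proj1_sig g |}; reflexivity.
Defined.

End UnderCategory.

Section FiltrationLimit.
Context {D : Category} {d : D} {F : MClass d} (HF : IsProjFiltration F) (HR : IsReduced F).
Context {I : Type} {cod : I -> D} {q : forall i, Hom d (cod i)}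
  (Hq : forall i, IsExtremalEpi (q i))
  (Hrep : forall c (e : Hom d c), IsExtremalEpi e ->
     exists i (k : Hom (cod i) c), IsIso k /\ comp k (q i) = e).

Definition RepIndex : Type := { i : I | F (cod i) (q i) }.
Definition rep_cod (a : RepIndex) : D := cod (proj1_sig a).
Definition rep_epi (a : RepIndex) : Hom d (rep_cod a) := q (proj1_sig a).

Lemma rep_cover {c : D} {phi : Hom d c} :
  F c phi -> exists (a : RepIndex) (g : Hom (rep_cod a) c), comp g (rep_epi a) = phi.
Proof.
  intros Hphi; destruct HR as [S [[HSF HSinit] HSepi]].
  destruct (HSinit _ _ Hphi) as [c' [e [HSe [g Hg]]]].
  destruct (Hrep _ e (HSepi _ _ HSe)) as [i [k [[k' [Hk'k Hkk']] Hk]]].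
  assert (Hqi : F (cod i) (q i)).
  { apply (filtration_saturated HF (HSF _ _ HSe)); exists k'.
    rewrite <- Hk, comp_assoc, Hk'k; apply comp_id_l. }
  exists (exist _ i Hqi), (comp g k); unfold rep_epi; simpl.
  rewrite <- comp_assoc, Hk; exact Hg.
Qed.

Lemma rep_directed (a b : RepIndex) :
  exists c : RepIndex, Mge (rep_epi c) (rep_epi a) /\ Mge (rep_epi c) (rep_epi b).
Proof.
  destruct (proj1 (proj2 HF) _ _ _ _ (proj2_sig a) (proj2_sig b))
    as [c [psi [Hpsi [Ha Hb]]]].
  destruct (rep_cover Hpsi) as [r [g Hg]].
  assert (Hr : Mge (rep_epi r) psi) by (exists g; exact Hg).
  exists r; split; [exact (mge_trans Hr Ha) | exact (mge_trans Hr Hb)].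
Qed.

Context {L0 : D}
  {pi0 : forall a : UnderCat rep_cod rep_epi, Hom L0 (UnderFunctor rep_cod rep_epi a)}
  (HL0 : IsLimit (UnderFunctor rep_cod rep_epi) pi0).

(* The projections below are well defined because the representatives are epimorphisms
   forming a directed system. *)
Lemma rep_factor_irrel (a a' : RepIndex) (c : D)
    (g : Hom (rep_cod a) c) (g' : Hom (rep_cod a') c) :
  comp g (rep_epi a) = comp g' (rep_epi a') -> comp g (pi0 a) = comp g' (pi0 a').
Proof.
  intros E; destruct (rep_directed a a') as [b [[s Hs] [s' Hs']]].
  rewrite <- (proj1 HL0 b a (exist _ s Hs)), <- (proj1 HL0 b a' (exist _ s' Hs')); simpl.
  rewrite !comp_assoc; f_equal.
  apply (proj1 (Hq (proj1_sig b))); rewrite <- !comp_assoc.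
  change (comp g (comp s (rep_epi b)) = comp g' (comp s' (rep_epi b))).
  rewrite Hs, Hs'; exact E.
Qed.

Definition rep_proj (c : D) (phi : Hom d c) (H : F c phi) : Hom L0 c :=
  let a := constructive_indefinite_description _ (rep_cover H) in
  comp (proj1_sig (constructive_indefinite_description _ (proj2_sig a))) (pi0 (proj1_sig a)).

Lemma rep_proj_spec (c : D) (phi : Hom d c) (H : F c phi)
    (a : RepIndex) (g : Hom (rep_cod a) c) :
  comp g (rep_epi a) = phi -> rep_proj c phi H = comp g (pi0 a).
Proof.
  intros Hg; unfold rep_proj.
  destruct (constructive_indefinite_description _ (rep_cover H)) as [a' Ha']; simpl.
  destruct (constructive_indefinite_description _ Ha') as [g' Hg']; simpl.
  apply rep_factor_irrel; rewrite Hg, Hg'; reflexivity.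
Qed.

Lemma rep_proj_flat_limit : IsFlatLimit F L0 rep_proj.
Proof.
  split.
  - intros c1 phi1 H1 c2 phi2 H2 g Hg.
    destruct (rep_cover H1) as [a [g1 Hg1]].
    rewrite (rep_proj_spec _ _ H1 a g1 Hg1), (rep_proj_spec _ _ H2 a (comp g g1));
      [apply comp_assoc|].
    rewrite <- comp_assoc, Hg1; exact Hg.
  - intros X al Hal.
    destruct (proj2 HL0 X (fun a => al _ _ (proj2_sig a))) as [h [Hh Hh_uniq]].
    { intros a b [s Hs]; apply Hal; exact Hs. }
    exists h; split.
    + intros c phi H; destruct (rep_cover H) as [a [g Hg]].
      rewrite (rep_proj_spec _ _ H a g Hg), <- comp_assoc, Hh; apply Hal; exact Hg.
    + intros h' Hh'; apply Hh_uniq; intros a.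
      transitivity (comp (rep_proj _ _ (proj2_sig a)) h'); [|apply Hh'].
      f_equal; rewrite (rep_proj_spec _ _ (proj2_sig a) a (idm _) (comp_id_l _)).
      symmetry; apply comp_id_l.
Qed.

End FiltrationLimit.

Lemma filtration_flat_limit_exists {D : Category} (Hc : Complete D)
    (Hcw : ExtremallyCoWellPowered D)
    {d : D} {F : MClass d} (HF : IsProjFiltration F) (HR : IsReduced F) :
  exists (L : D) (pi : forall c (phi : Hom d c), F c phi -> Hom L c), IsFlatLimit F L pi.
Proof.
  destruct (Hcw d) as [I [cod [q [Hq Hrep]]]].
  destruct (Hc _ (UnderFunctor (rep_cod (F := F) (cod := cod)) (rep_epi (q := q))))
    as [L0 [pi0 HL0]].
  exists L0; eexists; exact (rep_proj_flat_limit HF HR Hq Hrep HL0).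
Qed.

Section Completion.
Context {D : Category} (HEM : ExtrEpiMonoCategory D).
Context {d : D} {F : MClass d} (HF : IsProjFiltration F) (HR : IsReduced F).
Context {L : D} {pi : forall c (phi : Hom d c), F c phi -> Hom L c} (Hpi : IsFlatLimit F L pi).

Lemma completion_unit_exists : exists r : Hom d L, forall c phi H, comp (pi c phi H) r = phi.
Proof.
  destruct (proj2 Hpi d (fun _ phi _ => phi)) as [r [Hr _]].
  - intros c1 phi1 H1 c2 phi2 H2 g Hg; exact Hg.
  - exists r; exact Hr.
Qed.

Context {r : Hom d L} (Hr : forall c phi H, comp (pi c phi H) r = phi).

Definition completion_filtration : MClass L := fun c psi =>
  exists c1 (phi : Hom d c1) (H : F c1 phi), Mge (pi c1 phi H) psi.

Lemma completion_filtration_pi (c : D) (phi : Hom d c) (H : F c phi) :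
  completion_filtration c (pi c phi H).
Proof. exists c, phi, H; apply mge_refl. Qed.

Lemma completion_filtration_pullback {c : D} {psi : Hom L c} :
  completion_filtration c psi -> exists H : F c (comp psi r), pi c _ H = psi.
Proof.
  intros [c1 [phi [H [k <-]]]].
  assert (Hkphi : F c (comp (comp k (pi c1 phi H)) r)).
  { rewrite <- comp_assoc, Hr; apply (filtration_saturated HF H); exists k; reflexivity. }
  exists Hkphi; symmetry; apply (proj1 Hpi); rewrite <- comp_assoc, Hr; reflexivity.
Qed.

Lemma completion_filtration_projective : IsProjFiltration completion_filtration.
Proof.
  split; [|split].
  - destruct (proj1 HF) as [c [phi H]]; exists c, (pi c phi H).
    apply completion_filtration_pi.
  - intros a psi1 b psi2 [c1 [phi1 [H1 Hge1]]] [c2 [phi2 [H2 Hge2]]].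
    destruct (proj1 (proj2 HF) _ _ _ _ H1 H2) as [c [phi [H [[k1 E1] [k2 E2]]]]].
    exists c, (pi c phi H); split; [apply completion_filtration_pi|].
    split; [apply (mge_trans (f2 := pi c1 phi1 H1)) | apply (mge_trans (f2 := pi c2 phi2 H2))];
      try assumption; [exists k1 | exists k2]; apply (proj1 Hpi); assumption.
  - intros c1 psi1 c2 psi2 [c [phi [H Hge]]] Hge'.
    exists c, phi, H; exact (mge_trans Hge Hge').
Qed.

(* An extremal-epi part e of a member psi is again a projection, namely pi (e r). *)
Lemma completion_filtration_reduced : IsReduced completion_filtration.
Proof.
  apply (reduced_of_epi_part_closed HEM).
  intros a psi c e m Hpsi He Hm <-.
  destruct (completion_filtration_pullback Hpsi) as [Hmer Epsi].
  assert (Her : F c (comp e r)).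
  { apply (reduced_mono_cancel HF HEM HR (m := m)); [|exact Hm].
    rewrite comp_assoc; exact Hmer. }
  assert (E : pi c _ Her = e).
  { apply Hm; rewrite <- Epsi; apply (proj1 Hpi); apply comp_assoc. }
  rewrite <- E; apply completion_filtration_pi.
Qed.

Lemma completion_filtration_flat_limit :
  IsFlatLimit completion_filtration L (fun _ psi _ => psi).
Proof.
  split; [intros c1 psi1 H1 c2 psi2 H2 g Hg; exact Hg|].
  intros X al Hal.
  destruct (proj2 Hpi X (fun c phi H => al c _ (completion_filtration_pi c phi H)))
    as [h [Hh Hh_uniq]].
  { intros c1 phi1 H1 c2 phi2 H2 g Hg; apply Hal, (proj1 Hpi); exact Hg. }
  exists h; split.
  - intros c psi Hpsi; destruct (completion_filtration_pullback Hpsi) as [H E].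
    rewrite <- E at 1; rewrite Hh; apply (flat_cone_proper _ _ Hal); exact E.
  - intros h' Hh'; apply Hh_uniq; intros c phi H; apply Hh'.
Qed.

Lemma completion_iso : IsIsoFiltration completion_filtration.
Proof.
  apply iso_filtration_of_flat_limit; [exact completion_filtration_projective
    | exact completion_filtration_reduced | exact completion_filtration_flat_limit].
Qed.

(* (L, completion_filtration) is the reflection of (d, F) into K(D), with unit r. *)
Lemma completion_universal (X : KObj D) (f : Hom d (KObj_obj X)) :
  PMor F (KObj_fil (x := X)) f ->
  exists k : Hom L (KObj_obj X), PMor completion_filtration (KObj_fil (x := X)) k /\
    comp k r = f /\
    forall k', PMor completion_filtration (KObj_fil (x := X)) k' -> comp k' r = f -> k' = k.
Proof.
  intros Hf.
  assert (HX : IsFlatLimit (KObj_fil (x := X)) (KObj_obj X) (fun _ psi _ => psi))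
    by exact (iso_filtration_flat_limit (proj2_sig (projT2 X))).
  destruct (proj2 HX L (fun c psi H => pi c _ (Hf c psi H))) as [k [Hk _]].
  { intros c1 psi1 H1 c2 psi2 H2 g <-; apply (proj1 Hpi), comp_assoc. }
  assert (PM : PMor completion_filtration (KObj_fil (x := X)) k).
  { intros c psi H; rewrite (Hk c psi H); apply completion_filtration_pi. }
  exists k; split; [exact PM | split].
  - apply (flat_limit_jointly_mono HX); intros c psi H.
    rewrite comp_assoc, (Hk c psi H); apply Hr.
  - intros k' PM' Ek'; apply (flat_limit_jointly_mono HX); intros c psi H.
    destruct (completion_filtration_pullback (PM' c psi H)) as [H' E'].
    rewrite (Hk c psi H), <- E'; apply (flat_cone_proper _ _ (proj1 Hpi)).
    rewrite <- comp_assoc, Ek'; reflexivity.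
Qed.

End Completion.

Section KColimit.
Context {D : Category} (HEM : ExtrEpiMonoCategory D)
  (Hterm : HasTerminal D) (Hprod : HasBinaryProducts D).
Context {J : Category} {Fk : Functor J (KCat D)}
  {C : D} {io : forall j, Hom (KForget Fk j) C} (HC : IsColimit (KForget Fk) io).

Definition colimit_filtration : MClass C := fun c phi =>
  forall j, KObj_fil (x := Fk j) (comp phi (io j)).

Let HFk (j : J) : IsProjFiltration (KObj_fil (x := Fk j)) := proj1 (proj2_sig (projT2 (Fk j))).
Let HRk (j : J) : IsReduced (KObj_fil (x := Fk j)) :=
  proj1 (proj2 (proj2_sig (projT2 (Fk j)))).

Lemma colimit_filtration_projective : IsProjFiltration colimit_filtration.
Proof.
  destruct Hterm as [t Ht]; split; [|split].
  - destruct (Ht C) as [f _]; exists t, f; intros j; exact (filtration_terminal (HFk j) _ Ht).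
  - intros a f b g Hf Hg; destruct (Hprod a b) as [p [p1 [p2 Hp]]].
    destruct (proj1 Hp C f g) as [h [E1 E2]].
    exists p, h; split; [|split; [exists p1 | exists p2]; assumption].
    intros j; apply (filtration_product (HFk j) Hp); rewrite comp_assoc;
      [rewrite E1 | rewrite E2]; [exact (Hf j) | exact (Hg j)].
  - intros c1 phi1 c2 phi2 H [k <-] j.
    apply (filtration_saturated (HFk j) (H j)); exists k; apply comp_assoc.
Qed.

Lemma colimit_filtration_reduced : IsReduced colimit_filtration.
Proof.
  apply (reduced_of_epi_part_closed HEM); intros a f c e m Hf _ Hm <- j.
  apply (reduced_mono_cancel (HFk j) HEM (HRk j) (m := m)); [|exact Hm].
  rewrite comp_assoc; exact (Hf j).
Qed.

Context {L : D} {pi : forall c (phi : Hom C c), colimit_filtration c phi -> Hom L c}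
  (Hpi : IsFlatLimit colimit_filtration L pi)
  {r : Hom C L} (Hr : forall c phi H, comp (pi c phi H) r = phi).

Definition KColimit : KCat D :=
  existT _ L (exist _ (completion_filtration (pi := pi))
    (completion_iso HEM colimit_filtration_projective colimit_filtration_reduced Hpi Hr)).

Definition KColimitInj (j : J) : Hom (Fk j) KColimit.
Proof.
  exists (comp r (io j)); intros c psi Hpsi.
  destruct (completion_filtration_pullback colimit_filtration_projective Hpi Hr Hpsi) as [H _].
  rewrite comp_assoc; exact (H j).
Defined.

Lemma KColimit_isColimit : IsColimit Fk KColimitInj.
Proof.
  split.
  - intros i j u; apply sig_eq_pi; simpl.
    rewrite <- comp_assoc; f_equal; exact (proj1 HC i j u).
  - intros X al Hal.
    destruct (proj2 HC (KObj_obj X) _ (KForget_cocone Hal)) as [f [Hf Hf_uniq]].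
    assert (PMf : PMor colimit_filtration (KObj_fil (x := X)) f).
    { intros c psi H j; rewrite <- comp_assoc, Hf; exact (proj2_sig (al j) c psi H). }
    destruct (completion_universal colimit_filtration_projective Hpi Hr X f PMf)
      as [k [PMk [Ekr Hk_uniq]]].
    exists (exist _ k PMk); split.
    + intros j; apply sig_eq_pi; simpl; rewrite comp_assoc, Ekr; apply Hf.
    + intros [k' PMk'] Hk'; apply sig_eq_pi; simpl; apply (Hk_uniq k' PMk').
      apply Hf_uniq; intros j; rewrite <- comp_assoc.
      exact (f_equal (@proj1_sig _ _) (Hk' j)).
Qed.

End KColimit.

Theorem mainTheorem12 (D : Category) :
  Complete D -> Cocomplete D -> ExtremallyCoWellPowered D ->
  ExtrEpiMonoCategory D ->
  Complete (KCat D) /\ Cocomplete (KCat D).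
Proof.
  intros Hc Hco Hcw HEM.
  pose proof (complete_has_terminal Hc) as Hterm.
  pose proof (complete_has_binary_products Hc) as Hprod.
  split; intros J Fk.
  - destruct (Hc J (KForget Fk)) as [L [p HL]].
    do 2 eexists; exact (KLimit_isLimit HEM Hterm Hprod HL).
  - destruct (Hco J (KForget Fk)) as [C [io HC]].
    destruct (filtration_flat_limit_exists Hc Hcw
                (colimit_filtration_projective Hterm Hprod (io := io))
                (colimit_filtration_reduced HEM (io := io))) as [L [pi Hpi]].
    destruct (completion_unit_exists Hpi) as [r Hr].
    do 2 eexists; exact (KColimit_isColimit HEM Hterm Hprod HC Hpi Hr).
Qed.
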